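(* Let $\mathbb{K}$ be a field of characteristic zero, let $t\in\mathbb{K}\setminus\{0,1\}$, and let $\mathfrak{g}$ be a finite-dimensional perfect Lie algebra over $\mathbb{K}$, i.e. $\mathfrak{g}^{(2)}=\mathfrak{g}$. Then $\mathcal{D}(t,1,0)(\mathfrak{g})=\{0\}$.
   Context: For a Lie algebra $\mathfrak{g}=(V,\mu)$, the derived algebra $\mathfrak{g}^{(2)}$ is the linear span of all products $\mu(X,Y)$. $\mathcal{D}(t,1,0)(\mathfrak{g})$ denotes the space of $(t,1,0)$-derivations of $\mathfrak{g}$: linear maps $D:V\to V$ with $tD\mu(X,Y)=\mu(DX,Y)$ for all $X,Y\in V$. *)

From HB Require Import structures.
From mathcomp Require Import all_boot all_order all_algebra.
Set Implicit Arguments. Unset Strict Implicit. Unset Printing Implicit Defensive.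
Import GRing.Theory.
Local Open Scope ring_scope.

Definition is_lie_bracket (K : fieldType) (V : vectType K) (mu : V -> V -> V) : Prop :=
  [/\ (forall (a : K) (x y z : V), mu (a *: x + y) z = a *: mu x z + mu y z),
      (forall (a : K) (x y z : V), mu x (a *: y + z) = a *: mu x y + mu x z),
      (forall x : V, mu x x = 0) &
      (forall x y z : V, mu x (mu y z) + mu y (mu z x) + mu z (mu x y) = 0)].

Definition in_derived (K : fieldType) (V : vectType K) (mu : V -> V -> V) (v : V) : Prop :=
  exists (n : nat) (c : 'I_n -> K) (x y : 'I_n -> V),
    v = \sum_(i < n) c i *: mu (x i) (y i).

Definition perfect (K : fieldType) (V : vectType K) (mu : V -> V -> V) : Prop :=
  forall v : V, in_derived mu v.

Definition is_t10_derivation (K : fieldType) (V : vectType K) (mu : V -> V -> V)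
    (t : K) (D : 'End(V)) : Prop :=
  forall x y : V, t *: D (mu x y) = mu (D x) y.

(* Write [x, y] for mu x y.  Antisymmetry turns the defining identity
   t D[x, y] = [D x, y] into [D x, y] = [x, D y] = t D[x, y], so every double
   bracket Q(x, y, z) := [[D x, y], z] equals t^2 D[[x, y], z].  The Jacobi
   identity for x, y, z gives Q(x, y, z) + Q(y, z, x) + Q(z, x, y) = 0, while
   the Jacobi identity for D x, y, z gives the same sum with the middle term
   weighted by 1/t.  Hence (t - 1) Q = 0, so D vanishes on [[g, g], g], which is
   g itself when g is perfect. *)

From HB Require Import structures.
From mathcomp Require Import all_boot all_order all_algebra.
Local Open Scope ring_scope.
Import GRing.Theory.

Set Implicit Arguments.
Unset Strict Implicit.

Section LieBracket.

Variables (K : fieldType) (V : vectType K) (mu : V -> V -> V).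
Hypothesis mu_lie : is_lie_bracket mu.

Lemma bracketDl x y z : mu (x + y) z = mu x z + mu y z.
Proof. by case: mu_lie => linl _ _ _; rewrite -{1}(scale1r x) linl scale1r. Qed.

Lemma bracketDr x y z : mu z (x + y) = mu z x + mu z y.
Proof. by case: mu_lie => _ linr _ _; rewrite -{1}(scale1r x) linr scale1r. Qed.

Lemma bracket0l z : mu 0 z = 0.
Proof. by apply/eqP; rewrite -[X in X == _](addrK (mu 0 z)) -bracketDl addr0 subrr. Qed.

Lemma bracketZl a x z : mu (a *: x) z = a *: mu x z.
Proof. by case: mu_lie => linl _ _ _; rewrite -(addr0 (a *: x)) linl bracket0l addr0. Qed.

Lemma bracket_suml n (c : 'I_n -> K) (w : 'I_n -> V) z :
  mu (\sum_(i < n) c i *: w i) z = \sum_(i < n) c i *: mu (w i) z.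
Proof.
apply: (big_rec2 (fun u v => mu u z = v)); first exact: bracket0l.
by move=> i u v _ <-; rewrite bracketDl bracketZl.
Qed.

Lemma bracket_antisym x y : mu x y = - mu y x.
Proof.
case: mu_lie => _ _ alt _; have := alt (x + y).
rewrite bracketDl !bracketDr !alt add0r addr0 => /eqP.
by rewrite addr_eq0 => /eqP.
Qed.

Lemma bracket_jacobil x y z : mu (mu x y) z + mu (mu y z) x + mu (mu z x) y = 0.
Proof.
case: mu_lie => _ _ _ jacobi.
rewrite !(bracket_antisym (mu _ _)) -!opprD -[RHS]oppr0 -(jacobi z x y).
by rewrite addrC addrA.
Qed.

Lemma lfun_eq0_on_derived (f : 'End(V)) v :
  (forall x y, f (mu x y) = 0) -> in_derived mu v -> f v = 0.
Proof.
move=> f_bracket [n [c [x [y ->]]]].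
by rewrite linear_sum big1 // => i _; rewrite linearZ /= f_bracket scaler0.
Qed.

Lemma lfun_eq0_on_derived_bracketl (f : 'End(V)) u z :
  (forall x y, f (mu (mu x y) z) = 0) -> in_derived mu u -> f (mu u z) = 0.
Proof.
move=> f_bracket [n [c [x [y ->]]]].
rewrite bracket_suml linear_sum big1 // => i _.
by rewrite linearZ /= f_bracket scaler0.
Qed.

Section T10Derivation.

Variables (t : K) (D : 'End(V)).
Hypothesis D_t10 : is_t10_derivation mu t D.

Lemma t10_derivation_bracketr x y : mu x (D y) = t *: D (mu x y).
Proof. by rewrite bracket_antisym -D_t10 (bracket_antisym y) linearN scalerN opprK. Qed.

Lemma t10_derivation_swap x y : mu (D x) y = mu x (D y).
Proof. by rewrite t10_derivation_bracketr D_t10. Qed.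

Lemma t10_derivation_double_bracket x y z :
  mu (mu (D x) y) z = t ^+ 2 *: D (mu (mu x y) z).
Proof. by rewrite -D_t10 bracketZl -D_t10 scalerA expr2. Qed.

Lemma t10_derivation_double_bracket_cycle x y z :
  mu (mu (D x) y) z + mu (mu (D y) z) x + mu (mu (D z) x) y = 0.
Proof.
rewrite !t10_derivation_double_bracket -!scalerDr -!linearD /=.
by rewrite bracket_jacobil linear0 scaler0.
Qed.

Lemma t10_derivation_double_bracket_twisted_cycle x y z :
  t *: mu (mu (D x) y) z + mu (mu (D y) z) x + t *: mu (mu (D z) x) y = 0.
Proof.
have jacobi := bracket_jacobil (D x) y z.
have middle : mu (mu (D y) z) x = t *: mu (mu y z) (D x).
  by rewrite t10_derivation_double_bracket t10_derivation_bracketr scalerA.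
rewrite middle (t10_derivation_swap z).
by rewrite -!scalerDr jacobi scaler0.
Qed.

Lemma t10_derivation_double_bracket_eq0 x y z : (t - 1) *: mu (mu (D x) y) z = 0.
Proof.
have twisted := t10_derivation_double_bracket_twisted_cycle z x y.
rewrite -(scaler0 _ t) -(t10_derivation_double_bracket_cycle z x y) in twisted.
move: twisted; rewrite !scalerDr => /addIr /addrI tQ.
by rewrite scalerBl scale1r -tQ subrr.
Qed.

End T10Derivation.

End LieBracket.

Unset Implicit Arguments.

Theorem theorem3p3 (K : fieldType) (V : vectType K) (mu : V -> V -> V) (t : K) :
  [pchar K] =i pred0 ->
  t != 0 -> t != 1 ->
  is_lie_bracket mu ->
  perfect mu ->
  forall D : 'End(V), is_t10_derivation mu t D -> D = 0.
Proof.
move=> _ t_neq0 t_neq1 mu_lie mu_perfect D D_t10.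
have D_triple x y z : D (mu (mu x y) z) = 0.
  have := t10_derivation_double_bracket_eq0 mu_lie D_t10 x y z.
  rewrite (t10_derivation_double_bracket mu_lie D_t10) scalerA => /eqP.
  by rewrite scaler_eq0 !mulf_eq0 subr_eq0 (negbTE t_neq0) (negbTE t_neq1) => /eqP.
have D_bracket u z : D (mu u z) = 0.
  exact: lfun_eq0_on_derived_bracketl (fun x y => D_triple x y z) (mu_perfect u).
apply/lfunP => v; rewrite lfunE /=.
exact: lfun_eq0_on_derived (mu_perfect v).
Qed.
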